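(* A set $S$ of points of $PG(3,2)$ is a strong blocking set of size $9$ if and only if $S$ is a hyperbolic quadric $Q^{+}(3,2)$. That is, the minimal strong blocking sets of $PG(3,2)$ are exactly the hyperbolic quadrics $Q^{+}(3,2)$.
   Context: $PG(3,2)$ is the $3$-dimensional projective space over $\mathbb{F}_2$. A strong blocking set in $PG(3,2)$ is a set of points $S$ such that for every plane $\sigma$, the span $\langle \sigma\cap S\rangle$ equals $\sigma$; the minimum possible size of such a set is $9$, and a strong blocking set of size $9$ is called a minimal strong blocking set. A hyperbolic quadric $Q^{+}(3,2)$ is the set of points of $PG(3,2)$ which is the zero set of a non-degenerate quadratic form of hyperbolic type, i.e. a point set projectively equivalent to $\{(x_0:x_1:x_2:x_3): x_0x_1+x_2x_3=0\}$ (it has $9$ points). *)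

From HB Require Import structures.
From mathcomp Require Import all_boot all_order all_algebra.
Set Implicit Arguments. Unset Strict Implicit. Unset Printing Implicit Defensive.
Import GRing.Theory.
Local Open Scope ring_scope.

(* Vectors of F_2^4.  Over F_2 every 1-dim subspace has exactly one nonzero
   vector, so the points of PG(3,2) are exactly the nonzero vectors. *)
Definition vec4 := 'rV['F_2]_4.

Definition PGpoints : {set vec4} := [set x : vec4 | x != 0].

Definition is_plane (U : {vspace vec4}) : Prop := \dim U = 3%N.

Definition plane_points (U : {vspace vec4}) : {set vec4} :=
  [set x in PGpoints | x \in U].

Definition strong_blocking (S : {set vec4}) : Prop :=
  forall U : {vspace vec4}, is_plane U ->
    (<< enum (plane_points U :&: S)%SET >>)%VS = U.

Definition Qplus (x : vec4) : 'F_2 :=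
  x 0 (inord 0) * x 0 (inord 1) + x 0 (inord 2) * x 0 (inord 3).

Definition Qplus_std : {set vec4} := [set x in PGpoints | Qplus x == 0].

(* S is a hyperbolic quadric Q^+(3,2): the image of the standard one under a
   collineation of PG(3,2) (PGammaL(4,2) = PGL(4,2) = GL(4,2)). *)
Definition hyperbolic_quadric (S : {set vec4}) : Prop :=
  exists2 A : 'M['F_2]_4, A \in unitmx & S = [set x *m A | x in Qplus_std].

(* A set S of points is strongly blocking iff its complement T contains no four
   points summing to zero, i.e. no plane minus a line: such a quadruple spans a
   plane whose points in S lie on a line, and conversely if the points of S in a
   plane U span less than U, they lie in a line L of U and a coset u + L of L in
   U avoids S.  For |S| = 9 the complement T is thus a 6-point Sidon set of
   F_2^4.  Its 15 pair sums are then distinct and nonzero, hence exhaust the 15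
   points; this forces T to be the union of two skew lines.  GL(4,2) acts
   transitively on pairs of skew lines, and the complement of Q^+(3,2) is such
   a pair. *)

From HB Require Import structures.
From mathcomp Require Import all_boot all_order all_algebra zify.
Set Implicit Arguments. Unset Strict Implicit. Unset Printing Implicit Defensive.
Import GRing.Theory.
Local Open Scope ring_scope.

(** * Linear algebra over F_2 *)

Lemma F2_cases (k : 'F_2) : k = 0 \/ k = 1.
Proof. by case: k => [[|[|//]] ?]; [left|right]; apply/val_inj. Qed.

Section CharTwo.
Variable V : lmodType 'F_2.
Implicit Types u v : V.

Lemma addvv_F2 v : v + v = 0.
Proof. by rewrite -mulr2n -scaler_nat (_ : 2 = 0) ?scale0r //; apply/eqP. Qed.

Lemma oppv_F2 v : - v = v.
Proof. by rewrite -[LHS]add0r -(addvv_F2 v) addrK. Qed.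

Lemma addv_eq0_F2 u v : (u + v == 0) = (u == v).
Proof. by rewrite addr_eq0 oppv_F2. Qed.

Lemma addvK_F2 u v : u + v + v = u.
Proof. by rewrite -addrA addvv_F2 addr0. Qed.

End CharTwo.

Lemma memv_span_cons_F2 (V : vectType 'F_2) (u v : V) s :
  (u \in <<v :: s>>%VS) = (u \in <<s>>%VS) || (u + v \in <<s>>%VS).
Proof.
rewrite span_cons; apply/memv_addP/orP => [[w /vlineP[k ->] [t ts ->]]|].
  by case: (F2_cases k) => ->; [left | right];
    rewrite ?scale0r ?add0r ?scale1r ?(addrC v) ?addvK_F2.
case=> [us|uvs]; first by exists 0; rewrite ?mem0v //; exists u; rewrite ?add0r.
by exists v; rewrite ?memv_line //; exists (u + v); rewrite // addrC addvK_F2.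
Qed.

Lemma subv_dim_between (K : fieldType) (V : vectType K) (W U : {vspace V}) k :
  (W <= U)%VS -> (\dim W <= k <= \dim U)%N ->
  exists2 L : {vspace V}, (W <= L <= U)%VS & \dim L = k.
Proof.
move=> sWU; elim: k => [|k IH] /andP[leWk lekU].
  by exists W; [rewrite subvv | apply/eqP; rewrite -leqn0].
have [dimW|] := eqVneq (\dim W) k.+1; first by exists W; rewrite ?subvv.
move=> neWk; have leWk' : (\dim W <= k)%N by rewrite -ltnS ltn_neqAle neWk.
have [|L /andP[sWL sLU] dimL] := IH; first by rewrite leWk' ltnW.
have /subvPn[u uU uL] : ~~ (U <= L)%VS.
  by apply: contraTN lekU => /dimvS; rewrite dimL -ltnNge ltnS.
exists (L + <[u]>)%VS.
  by rewrite (subv_trans sWL (addvSl _ _)) subv_add sLU -memvE.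
apply/eqP; rewrite eqn_leq; apply/andP; split.
  by rewrite -dimL -addn1 (leq_trans (dimv_add_leqif _ _)) ?leq_add2l ?dim_vline ?leq_b1.
rewrite -dimL (ltn_leqif (dimv_leqif_sup (addvSl _ _))) subv_add subvv /=.
by rewrite -memvE.
Qed.

Lemma unitmx_surj (F : fieldType) n (M : 'M[F]_n) :
  (forall v : 'rV_n, exists u, v = u *m M) -> M \in unitmx.
Proof.
move=> Msurj; rewrite -row_full_unit -sub1mx; apply/row_subP => i.
by have [u ->] := Msurj (row i 1%:M); apply: submxMl.
Qed.

Lemma unitmx_span_full (F : fieldType) n (X : n.-tuple 'rV[F]_n) :
  <<X>>%VS = fullv -> \matrix_(i < n) X`_i \in unitmx.
Proof.
move=> Xfull; apply: unitmx_surj => v; exists (\row_i coord X i v).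
rewrite mulmx_sum_row {1}(coord_span (_ : v \in <<X>>%VS)) ?Xfull ?memvf //.
by apply: eq_bigr => i _; rewrite rowK mxE.
Qed.

(** * Points, lines and Sidon sets of PG(3,2) *)

Lemma card_PGpoints : #|PGpoints| = 15%N.
Proof.
rewrite (_ : PGpoints = [set~ 0]); last by apply/setP => v; rewrite !inE.
by rewrite cardsC1 card_mx card_Fp.
Qed.

Definition line (x y : vec4) : {set vec4} := [set x; y; x + y].

Lemma lineC x y : line x y = line y x.
Proof. by apply/setP => v; rewrite !inE addrC (orbC (v == x)). Qed.

Lemma line_addr x y : line x (x + y) = line x y.
Proof. by apply/setP => v; rewrite !inE addrA addvv_F2 add0r -!orbA (orbC (v == y)). Qed.

Lemma line_rotate x y p : p \in line x y ->
  exists x' y', line x' y' = line x y /\ p = x' + y'.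
Proof.
rewrite !inE => /orP[/orP[]|] /eqP->; last by exists x, y.
  by exists y, (y + x); rewrite line_addr lineC addrA addvv_F2 add0r.
by exists x, (x + y); rewrite line_addr addrA addvv_F2 add0r.
Qed.

Lemma line_addv x y a b : a \in line x y -> b \in line x y -> a != b ->
  a + b \in line x y.
Proof.
move=> /line_rotate[x' [y' [<- ->]]]; rewrite !inE.
move=> /orP[/orP[]|] /eqP->; rewrite ?eqxx // => _.
  by rewrite [x' + y']addrC addvK_F2 eqxx orbT.
by rewrite addvK_F2 eqxx.
Qed.

Lemma lineE x y : line x y = [set v in [:: x; y; x + y]].
Proof. by apply/setP => v; rewrite !inE -!orbA ?orbF. Qed.

Lemma card_line x y : x != 0 -> y != 0 -> x != y -> #|line x y| = 3%N.
Proof.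
move=> x0 y0 xy; rewrite lineE cardsE; apply/card_uniqP; rewrite /= !inE negb_or xy /=.
rewrite -{1}[x]addr0 (inj_eq (addrI x)) eq_sym y0 /=.
by rewrite -{1}[y]add0r (inj_eq (addIr y)) eq_sym x0.
Qed.

Lemma line_not0 x y : x != 0 -> y != 0 -> x != y -> 0 \notin line x y.
Proof. by move=> x0 y0 xy; rewrite !inE !negb_or ![0 == _]eq_sym x0 y0 addv_eq0_F2. Qed.

Lemma line_subv x y v : v \in line x y -> v \in <<[:: x; y]>>%VS.
Proof.
rewrite !inE => /orP[/orP[]|] /eqP->; rewrite ?memvD ?memv_span //;
  by rewrite !inE eqxx ?orbT.
Qed.

Lemma line_zero_sum_size (a b : vec4) (t : seq vec4) : uniq t -> 0 \notin t ->
  {subset t <= line a b} -> \sum_(v <- t) v = 0 -> (size t == 0) || (size t == 3).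
Proof.
move=> ut t0 tL; have := subset_leq_card (introT subsetP tL).
rewrite (card_uniqP ut) lineE cardsE => /leq_trans/(_ (card_size _)).
move: ut t0; case: {tL}t => [|v [|w [|? [|? ?]]]] //=; rewrite !big_cons big_nil addr0 !inE.
  by move=> _ v0 _ v_eq0; rewrite v_eq0 eqxx in v0.
by rewrite andbT => vw _ _ /eqP; rewrite addv_eq0_F2 (negPf vw).
Qed.

Lemma imset_mulmx_line (A : 'M['F_2]_4) x y :
  [set v *m A | v in line x y] = line (x *m A) (y *m A).
Proof. by rewrite !imsetU !imset_set1 mulmxDl. Qed.

Lemma mulmx_PG_setD (X : {set vec4}) A : A \in unitmx ->
  [set v *m A | v in PGpoints :\: X] = PGpoints :\: [set v *m A | v in X].
Proof.
move=> uA; rewrite !(can_imset_pre _ (mulmxK uA)) preimsetD; congr (_ :\: _).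
apply/setP => v; rewrite !inE; congr negb; apply/eqP/eqP => [|->]; last exact: mul0mx.
by move/(congr1 (mulmx^~ A)); rewrite mulmxKV // mul0mx.
Qed.

(* Over F_2 four distinct vectors sum to 0 iff they split into two pairs with
   the same sum, so this is the usual Sidon property of F_2^4. *)
Definition sidon (T : {set vec4}) : Prop :=
  forall s : seq vec4, uniq s -> size s = 4%N -> {subset s <= T} ->
  \sum_(v <- s) v != 0.

Lemma sidon_pair_sum_inj (T : {set vec4}) x y z w : sidon T ->
  x \in T -> y \in T -> z \in T -> w \in T -> x != y -> z != w ->
  x + y = z + w -> [set x; y] = [set z; w].
Proof.
move=> sT xT yT zT wT xy zw E.
have [xz|xz] := eqVneq x z; first by move: E; rewrite xz => /addrI->.
have [xw|xw] := eqVneq x w.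
  by move: E; rewrite xw addrC => /addIr->; rewrite setUC.
have [yz|yz] := eqVneq y z.
  by move: E; rewrite yz addrC => /addrI/eqP; rewrite (negPf xw).
have [yw|yw] := eqVneq y w.
  by move: E; rewrite yw => /addIr/eqP; rewrite (negPf xz).
have uq : uniq [:: x; y; z; w] by rewrite /= !inE !negb_or xy xz xw yz yw zw.
have sub : {subset [:: x; y; z; w] <= T} by move=> v; rewrite !inE => /or4P[] /eqP->.
by move: (sT _ uq erefl sub); rewrite !big_cons big_nil addr0 addrA E addvv_F2 eqxx.
Qed.

Lemma sidon_mulmx (T : {set vec4}) A :
  A \in unitmx -> sidon T -> sidon [set v *m A | v in T].
Proof.
move=> uA sT s us s4 sTA.
have sub : {subset [seq v *m invmx A | v <- s] <= T}.
  by move=> _ /mapP[v /sTA/imsetP[t tT ->] ->]; rewrite mulmxK.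
have := sT _ _ _ sub; rewrite map_inj_uniq ?size_map; last exact: can_inj (mulmxKV uA).
rewrite big_map -mulmx_suml => /(_ us s4).
by apply: contra_neq => ->; rewrite mul0mx.
Qed.

(** * Strong blocking sets *)

Lemma span2_uniq (l1 l2 : vec4) : free [:: l1; l2] -> uniq [:: 0; l1; l2; l1 + l2].
Proof.
move=> l_free; have l1_0 := free_not0 l_free (mem_head _ _).
have l2_0 := free_not0 l_free (mem_last _ _).
have l12 : l1 != l2 by move: (free_uniq l_free); rewrite /= inE andbT.
rewrite /= !inE !negb_or ![0 == _]eq_sym l1_0 l2_0 addv_eq0_F2 l12 /=.
rewrite -{1}[l1]addr0 (inj_eq (addrI l1)) eq_sym l2_0 /=.
by rewrite -{1}[l2]add0r (inj_eq (addIr l2)) eq_sym l1_0.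
Qed.

Lemma sum_span2_coset (u l1 l2 : vec4) : \sum_(w <- [:: 0; l1; l2; l1 + l2]) (w + u) = 0.
Proof.
rewrite big_split /= big_const_seq /= !big_cons big_nil.
by rewrite !addr0 add0r [l1 + (l2 + _)]addrA !addvv_F2 !addr0 !addvv_F2.
Qed.

Lemma quad_plane x y z : uniq [:: x; y; z] -> 0 \notin [:: x; y; z; x + y + z] ->
  is_plane <<[:: x; y; z]>>%VS.
Proof.
rewrite /is_plane -[3%N]/(size [:: x; y; z]) => uq n0; apply/eqP; rewrite -/(free _).
rewrite !free_cons nil_free andbT !memv_span_cons_F2 span_nil !memv0 -!addrA !addv_eq0_F2.
move: uq n0; rewrite /= !inE !negb_or ![0 == _]eq_sym -!addrA addv_eq0_F2.
by case/andP=> /andP[-> ->] /andP[-> _] /and4P[-> -> -> ->].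
Qed.

Lemma plane_minus_quad (x y z u : vec4) : u \in <<[:: x; y; z]>>%VS ->
  u \notin [:: 0; x; y; z; x + y + z] -> u \in <<[:: (x + y)%R; (x + z)%R]>>%VS.
Proof.
have yz_span : y + z \in <<[:: (x + y)%R; (x + z)%R]>>%VS.
  by rewrite -[y + z]add0r -(addvv_F2 x) addrACA memvD ?memv_span ?inE ?eqxx ?orbT.
move=> uU; rewrite !memv_span_cons_F2 span_nil !memv0 -!addrA !addv_eq0_F2 in uU.
rewrite !inE -!addrA.
case/orP: uU => [/orP[/orP[] | /orP[]] | /orP[/orP[] | /orP[]]] /eqP->;
  rewrite ?eqxx ?orbT // => _; by rewrite ?yz_span ?memv_span ?inE ?eqxx ?orbT.
Qed.

Lemma strong_blocking_sidon (S : {set vec4}) : S \subset PGpoints -> strong_blocking S ->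
  sidon (PGpoints :\: S).
Proof.
move=> SPG sbS [|x [|y [|z [|w []]]]] // uq _ sT.
rewrite !big_cons big_nil addr0 !addrA addv_eq0_F2; apply/negP => /eqP w_xyz.
subst w; have outS v : v \in [:: x; y; z; x + y + z] -> (v != 0) && (v \notin S).
  by move/sT; rewrite !inE andbC.
have n0 : 0 \notin [:: x; y; z; x + y + z] by apply/negP => /outS; rewrite eqxx.
have uq3 : uniq [:: x; y; z].
  by move: uq; rewrite -[[:: x; y; z; _]]/([:: x; y; z] ++ [:: _]) cat_uniq => /andP[].
have Uplane := quad_plane uq3 n0.
have /dimvS : (<<enum (plane_points <<[:: x; y; z]>> :&: S)%SET>>
                <= <<[:: (x + y)%R; (x + z)%R]>>)%VS.
  apply/span_subvP => u; rewrite mem_enum !inE => /andP[/andP[u0 uU] uS].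
  apply: plane_minus_quad uU _; rewrite in_cons (negPf u0) /=.
  by apply: contraL uS => /outS/andP[].
by rewrite sbS // Uplane => /leq_trans/(_ (dim_span _)).
Qed.

Lemma sidon_strong_blocking (S : {set vec4}) : S \subset PGpoints ->
  sidon (PGpoints :\: S) -> strong_blocking S.
Proof.
move=> SPG sT U Uplane; set W := <<_>>%VS.
have WU : (W <= U)%VS by apply/span_subvP => u; rewrite mem_enum !inE => /andP[/andP[_ ->]].
apply/eqP; rewrite eqEdim WU Uplane leqNgt; apply/negP => dimW.
have [L /andP[WL LU] dimL] : exists2 L : {vspace vec4}, (W <= L <= U)%VS & \dim L = 2%N.
  by apply: subv_dim_between WU _; rewrite -ltnS dimW Uplane.
have /subvPn[u uU uL] : ~~ (U <= L)%VS by apply/negP => /dimvS; rewrite Uplane dimL.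
have [l1 [l2 [l_free l_span]]] : exists l1 l2, free [:: l1; l2] /\ <<[:: l1; l2]>>%VS = L.
  have := vbasisP L; have := size_tuple (vbasis L); move: (tval _) => X.
  by rewrite dimL; case: X => [|l1 [|l2 []]] // _ /andP[/eqP ? ?]; exists l1, l2.
have quadT w : w \in L -> w + u \in PGpoints :\: S.
  move=> wL; have wuL : w + u \notin L by rewrite rpredDl.
  have wu0 : w + u != 0 by apply: contraNneq wuL => ->; apply: mem0v.
  rewrite !inE wu0 andbT; apply: contra wuL => wuS; apply/(subvP WL)/memv_span.
  by rewrite mem_enum !inE wuS wu0 memvD ?(subvP LU w wL).
set quad := [seq w + u | w <- [:: 0; l1; l2; l1 + l2]].
have quadT' : {subset quad <= PGpoints :\: S}.
  move=> _ /mapP[w w4 ->]; apply: quadT; rewrite -l_span.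
  move: w4; rewrite !inE => /or4P[] /eqP->;
    by rewrite ?mem0v ?memvD ?memv_span ?inE ?eqxx ?orbT.
have := sT quad; rewrite map_inj_uniq ?span2_uniq //; last exact: addIr.
by rewrite big_map sum_span2_coset eqxx => /(_ isT erefl quadT').
Qed.

(** * Pairs of skew lines *)

Definition skew_lines (T : {set vec4}) : Prop :=
  exists x y p q, free [:: x; y; p; q] /\ T = line x y :|: line p q.

Lemma free_vec4E (X : seq vec4) : size X = 4%N -> free X = (<<X>>%VS == fullv).
Proof.
move=> X4; have := dim_span X.
by rewrite /free eqEdim subvf dimvf dim_matrix X4 eqn_leq => ->.
Qed.

Section SkewLines.

Variables x y p q : vec4.
Hypothesis xypq_free : free [:: x; y; p; q].

Let skew_points : [/\ x != 0, y != 0, x != y, p != 0 & q != 0] /\ p != q.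
Proof.
rewrite !(free_not0 xypq_free) ?inE ?eqxx ?orbT //.
by move: (free_uniq xypq_free); rewrite /= !inE !negb_or => /and4P[/and3P[-> _ _] _ ->].
Qed.

Lemma skew_span_cap : (<<[:: x; y]>> :&: <<[:: p; q]>> = 0)%VS.
Proof.
apply/eqP; rewrite -dimv_eq0 -leqn0.
have := dimv_sum_cap <<[:: x; y]>> <<[:: p; q]>>.
rewrite -span_cat (eqP xypq_free) /=.
by have := dim_span [:: x; y]; have := dim_span [:: p; q]; rewrite /=; lia.
Qed.

Lemma skew_lines_not0 : 0 \notin line x y :|: line p q.
Proof.
by have [[x0 y0 xy p0 q0] pq] := skew_points; rewrite inE negb_or !line_not0.
Qed.

Lemma card_line_pair : #|line x y :|: line p q| = 6%N.
Proof.
have [[x0 y0 xy p0 q0] pq] := skew_points.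
rewrite cardsU !card_line // (_ : line x y :&: line p q = set0) ?cards0 //.
apply/setP => v; rewrite inE in_set0; apply/negP => /andP[vxy vpq].
have : v \in (<<[:: x; y]>> :&: <<[:: p; q]>>)%VS by rewrite memv_cap !line_subv.
rewrite skew_span_cap memv0 => /eqP v0.
by move: vxy; rewrite v0 (negPf (line_not0 x0 y0 xy)).
Qed.

Lemma sidon_line_pair : sidon (line x y :|: line p q).
Proof.
move=> s us s4 sT; apply/eqP.
rewrite (bigID (mem (line x y))) /=.
rewrite -[\sum_(v <- s | v \in _) v]big_filter -[\sum_(v <- s | v \notin _) v]big_filter.
set t1 := filter _ s; set t2 := filter _ s => s0.
have t1L : {subset t1 <= line x y} by move=> v; rewrite mem_filter => /andP[].
have t2L : {subset t2 <= line p q}.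
  by move=> v; rewrite mem_filter => /andP[vL /sT]; rewrite inE (negPf vL).
have t1U : \sum_(v <- t1) v \in <<[:: x; y]>>%VS.
  by rewrite big_seq; apply: memv_suml => v /t1L/line_subv.
have t2V : \sum_(v <- t2) v \in <<[:: p; q]>>%VS.
  by rewrite big_seq; apply: memv_suml => v /t2L/line_subv.
(* The partial sums over the two lines lie in subspaces meeting only in 0. *)
have t12 : \sum_(v <- t1) v = \sum_(v <- t2) v by apply/eqP; rewrite -addv_eq0_F2 s0.
have t1_0 : \sum_(v <- t1) v = 0.
  by apply/eqP; rewrite -memv0 -skew_span_cap memv_cap t1U t12.
have t2_0 : \sum_(v <- t2) v = 0 by rewrite -t12.
have size03 t a b : subseq t s -> {subset t <= line a b} ->
    \sum_(v <- t) v = 0 -> (size t == 0) || (size t == 3).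
  move=> ts; apply: line_zero_sum_size (subseq_uniq ts us) _.
  by apply: contra skew_lines_not0 => /(mem_subseq ts)/sT.
have : (size t1 + size t2)%N = 4%N by rewrite !size_filter count_predC.
case/orP: (size03 _ _ _ (filter_subseq _ _) t1L t1_0) => /eqP->;
  by case/orP: (size03 _ _ _ (filter_subseq _ _) t2L t2_0) => /eqP->.
Qed.
End SkewLines.

Lemma skew_lines_sidon (T : {set vec4}) : skew_lines T -> sidon T.
Proof. by case=> x [y [p [q [xypq_free ->]]]]; apply: sidon_line_pair. Qed.

Lemma card_skew_lines (T : {set vec4}) : skew_lines T -> #|T| = 6%N.
Proof. by case=> x [y [p [q [xypq_free ->]]]]; apply: card_line_pair. Qed.

Lemma sidon_pair_sums (T : {set vec4}) : T \subset PGpoints -> #|T| = 6%N -> sidon T ->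
  forall v, v \in PGpoints -> exists x y, [/\ x \in T, y \in T, x != y & v = x + y].
Proof.
move=> TPG T6 sT.
pose P := [set E : {set vec4} | E \subset T & #|E| == 2].
pose psum (E : {set vec4}) := \sum_(v in E) v.
have pairP E : E \in P -> exists x y, [/\ x \in T, y \in T, x != y & E = [set x; y]].
  rewrite inE => /andP[ET /cards2P[x [y [xy Exy]]]]; exists x, y.
  by rewrite Exy in ET *; split=> //; apply: (subsetP ET); rewrite !inE eqxx ?orbT.
have psum2 x y : x != y -> psum [set x; y] = x + y.
  by move=> xy; rewrite /psum big_setU1 ?big_set1 // inE.
have psum_inj : {in P &, injective psum}.
  move=> E F /pairP[x [y [xT yT xy ->]]] /pairP[z [w [zT wT zw ->]]].
  by rewrite !psum2 //; apply: (sidon_pair_sum_inj sT).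
(* 15 distinct nonzero pair sums exhaust the 15 points. *)
have psumP : psum @: P = PGpoints.
  apply/eqP; rewrite eqEcard card_PGpoints (card_in_imset psum_inj) cards_draws T6 andbT.
  apply/subsetP => _ /imsetP[E /pairP[x [y [_ _ xy ->]]] ->].
  by rewrite inE psum2 // addv_eq0_F2.
move=> v; rewrite -psumP => /imsetP[E /pairP[x [y [xT yT xy ->]]] ->].
by exists x, y; rewrite psum2.
Qed.

(* Otherwise p = x' + y' for two points x', y' of the line, and then
   (p + q) + q = x' + y' would be a second decomposition of p as a pair sum. *)
Lemma sidon_sum_notin_line (T : {set vec4}) x y p q : sidon T -> T \subset PGpoints ->
  line x y \subset T -> p \in T -> q \in T -> p != q -> p + q \in T ->
  p + q \notin line x y -> p \notin line x y.
Proof.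
move=> sT TPG lT pT qT pq pqT pqL; apply/negP => pL.
have [x' [y' [lxy pxy]]] := line_rotate pL; rewrite -lxy in lT pqL pL.
have p0 : p != 0 by have := subsetP TPG p pT; rewrite inE.
have [qL|qL] := boolP (q \in line x' y'); first by rewrite line_addv in pqL.
have x'T : x' \in T by apply: (subsetP lT); rewrite !inE eqxx.
have y'T : y' \in T by apply: (subsetP lT); rewrite !inE eqxx orbT.
have x'y' : x' != y' by apply: contraNneq p0 => xy'; rewrite pxy xy' addvv_F2.
have pqq : p + q != q by rewrite -{2}[q]add0r (inj_eq (addIr q)).
have pq_sum : p + q + q = x' + y' by rewrite addvK_F2.
have /setP/(_ (p + q)) := sidon_pair_sum_inj sT pqT qT x'T y'T pqq x'y' pq_sum.
rewrite !inE eqxx /= => /esym pq_xy.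
by move: pqL; rewrite !inE pq_xy.
Qed.

Lemma line_pair_sums_free (T : {set vec4}) x y p q : T = line x y :|: line p q ->
  (forall v, v \in PGpoints -> exists a b, [/\ a \in T, b \in T, a != b & v = a + b]) ->
  free [:: x; y; p; q].
Proof.
move=> T_lines pair_sum; rewrite free_vec4E // eqEsubv subvf /=.
have Tspan : {subset T <= <<[:: x; y; p; q]>>%VS}.
  move=> v; rewrite T_lines inE -[[:: x; y; p; q]]/([:: x; y] ++ [:: p; q]) span_cat.
  by case/orP=> /line_subv; apply: subvP; rewrite ?addvSl ?addvSr.
apply/subvP => v _; have [->|v0] := eqVneq v 0; first exact: mem0v.
have vPG : v \in PGpoints by rewrite inE.
have [a [b [aT bT _ ->]]] := pair_sum v vPG.
by rewrite memvD ?Tspan.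
Qed.

Lemma sidon_skew_lines (T : {set vec4}) :
  T \subset PGpoints -> #|T| = 6%N -> sidon T -> skew_lines T.
Proof.
move=> TPG T6 sT; have pair_sum := sidon_pair_sums TPG T6 sT.
have PG0 v : v \in T -> v != 0 by move/(subsetP TPG); rewrite inE.
have [t tT] : exists t, t \in T by apply/card_gt0P; rewrite T6.
have [x [y [xT yT xy t_xy]]] := pair_sum t (subsetP TPG t tT).
have xyT : line x y \subset T.
  by apply/subsetP => v; rewrite !inE -t_xy => /orP[/orP[]|] /eqP->.
have card_rest : #|T :\: line x y| = 3%N.
  by rewrite cardsD (setIidPr xyT) T6 card_line ?PG0.
have [u] : exists u, u \in T :\: line x y by apply/card_gt0P; rewrite card_rest.
rewrite inE => /andP[uL uT].
have [p [q [pT qT pq u_pq]]] := pair_sum u (subsetP TPG u uT).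
rewrite u_pq in uL uT.
have pL : p \notin line x y := sidon_sum_notin_line sT TPG xyT pT qT pq uT uL.
have qL : q \notin line x y.
  by rewrite addrC in uL uT; rewrite (sidon_sum_notin_line sT TPG xyT qT pT) // eq_sym.
have pqT : line p q = T :\: line x y.
  apply/eqP; rewrite eqEcard card_rest card_line ?PG0 // leqnn andbT.
  apply/subsetP => v vpq; rewrite !inE in vpq; rewrite inE.
  by case/orP: vpq => [/orP[]|] /eqP->; rewrite ?pL ?qL ?pT ?qT ?uL ?uT.
have T_lines : T = line x y :|: line p q.
  apply/setP => v; rewrite pqT in_setU in_setD.
  by case: (boolP (v \in line x y)) => //= /(subsetP xyT).
by exists x, y, p, q; split=> //; apply: line_pair_sums_free T_lines pair_sum.
Qed.

Lemma skew_lines_transitive (T T' : {set vec4}) : skew_lines T -> skew_lines T' ->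
  exists2 A, A \in unitmx & T' = [set v *m A | v in T].
Proof.
case=> x [y [p [q [free_X ->]]]] [x' [y' [p' [q' [free_X' ->]]]]].
have unit_rows (a b c d : vec4) : free [:: a; b; c; d] ->
    \matrix_(i < 4) [tuple a; b; c; d]`_i \in unitmx.
  by rewrite free_vec4E // => /eqP; apply: unitmx_span_full.
pose M := \matrix_(i < 4) [tuple x; y; p; q]`_i.
pose M' := \matrix_(i < 4) [tuple x'; y'; p'; q']`_i.
have uM : M \in unitmx by apply: unit_rows.
exists (invmx M *m M'); first by rewrite unitmx_mul unitmx_inv uM unit_rows.
have rowM i : row i M *m (invmx M *m M') = row i M' by rewrite !rowE !mulmxA mulmxK.
rewrite imsetU !imset_mulmx_line.
have [<- <- <- <-] : [/\ row 0 M = x, row 1 M = y, row 2 M = p & row 3 M = q].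
  by rewrite !rowK.
have [<- <- <- <-] : [/\ row 0 M' = x', row 1 M' = y', row 2 M' = p' & row 3 M' = q'].
  by rewrite !rowK.
by rewrite !rowM.
Qed.

(** * The hyperbolic quadric *)

Definition v4 (a b c d : 'F_2) : vec4 := \row_(j < 4) [:: a; b; c; d]`_j.

Lemma v4_entries (u : vec4) : u = v4 (u 0 0) (u 0 1) (u 0 2) (u 0 3).
Proof.
apply/rowP => j; rewrite mxE.
by case: j => [[|[|[|[|]]]] ?] //=; congr (u 0 _); apply/val_inj.
Qed.

Lemma v4_0 : 0 = v4 0 0 0 0.
Proof. by apply/rowP => j; rewrite !mxE; case: j => [[|[|[|[|]]]] ?]. Qed.

Lemma v4_add a b c d a' b' c' d' :
  v4 a b c d + v4 a' b' c' d' = v4 (a + a') (b + b') (c + c') (d + d').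
Proof. by apply/rowP => j; rewrite !mxE; case: j => [[|[|[|[|]]]] ?]. Qed.

Lemma v4_eq a b c d a' b' c' d' :
  (v4 a b c d == v4 a' b' c' d') = [&& a == a', b == b', c == c' & d == d'].
Proof.
apply/eqP/and4P => [/rowP E|[/eqP-> /eqP-> /eqP-> /eqP->] //].
by split; apply/eqP; [move: (E 0) | move: (E 1) | move: (E 2) | move: (E 3)]; rewrite !mxE.
Qed.

Lemma Qplus_v4 a b c d : Qplus (v4 a b c d) = a * b + c * d.
Proof. by rewrite /Qplus !mxE !inordK. Qed.

Lemma Qplus_compl_lines : PGpoints :\: Qplus_std =
  line (v4 1 1 1 0) (v4 1 1 0 1) :|: line (v4 1 0 1 1) (v4 0 1 1 1).
Proof.
apply/setP => u; rewrite [u]v4_entries; move: (u 0 0) (u 0 1) (u 0 2) (u 0 3) => a b c d.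
rewrite !inE v4_0 !v4_add !v4_eq Qplus_v4.
by case: (F2_cases a) => ->; case: (F2_cases b) => ->;
  case: (F2_cases c) => ->; case: (F2_cases d) => ->.
Qed.

Lemma skew_lines_Qplus_compl : skew_lines (PGpoints :\: Qplus_std).
Proof.
exists (v4 1 1 1 0), (v4 1 1 0 1), (v4 1 0 1 1), (v4 0 1 1 1); split.
  by rewrite !free_cons nil_free !memv_span_cons_F2 span_nil !memv0 v4_0 !v4_add !v4_eq.
exact: Qplus_compl_lines.
Qed.

Lemma Qplus_std_sub : Qplus_std \subset PGpoints.
Proof. by apply/subsetP => v; rewrite inE => /andP[]. Qed.

Lemma card_Qplus_std : #|Qplus_std| = 9%N.
Proof.
have := card_skew_lines skew_lines_Qplus_compl.
have := subset_leq_card Qplus_std_sub.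
by rewrite cardsD card_PGpoints (setIidPr Qplus_std_sub); lia.
Qed.

Theorem theorem2p3 (S : {set vec4}) :
  S \subset PGpoints ->
  ((strong_blocking S /\ #|S| = 9%N) <-> hyperbolic_quadric S).
Proof.
have compl_compl (X : {set vec4}) : X \subset PGpoints -> PGpoints :\: (PGpoints :\: X) = X.
  by move=> XPG; rewrite setDDr setDv set0U (setIidPr XPG).
move=> SPG; split => [[/(strong_blocking_sidon SPG) sT S9] | [A uA S_A]].
  have T6 : #|PGpoints :\: S| = 6%N by rewrite cardsD (setIidPr SPG) card_PGpoints S9.
  have [A uA TA] := skew_lines_transitive skew_lines_Qplus_compl
    (sidon_skew_lines (subsetDl _ _) T6 sT).
  exists A => //.
  by rewrite -(compl_compl S SPG) TA -mulmx_PG_setD // (compl_compl _ Qplus_std_sub).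
rewrite S_A in SPG *; split.
  apply: (sidon_strong_blocking SPG); rewrite -mulmx_PG_setD //.
  exact/sidon_mulmx/skew_lines_sidon/skew_lines_Qplus_compl.
by rewrite card_imset ?card_Qplus_std //; apply: can_inj (mulmxK uA).
Qed.
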